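(* Let $d \geq 2$ be a fixed integer. There is a constant $c = c(d) > 0$ such that for every positive integer $n$ there is a subset $A \subset [n]^d$ with $|A| \geq c n$ such that no $d+1$ points of $A$ lie on a common hyperplane and no $2d$ points of $A$ lie on a common sphere.
   Context: $[n]=\{1,\dots,n\}$. A sphere means a $(d-1)$-dimensional sphere in $\mathbb{R}^d$; a hyperplane means an affine hyperplane in $\mathbb{R}^d$. *)

From HB Require Import structures.
From mathcomp Require Import all_boot all_order all_algebra.
From mathcomp Require Import reals.
Set Implicit Arguments. Unset Strict Implicit. Unset Printing Implicit Defensive.
Import Order.TTheory GRing.Theory Num.Theory.
Local Open Scope ring_scope.

(* The grid [n]^d, [n] = {1,...,n}: a grid point is g : {ffun 'I_d -> 'I_n},
   whose i-th coordinate is the integer (g i) + 1 in {1,...,n}. *)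
Definition grid_pt (R : realType) (d n : nat) (g : {ffun 'I_d -> 'I_n}) : 'I_d -> R :=
  fun i => ((g i).+1)%:R.

Definition on_hyperplane (R : realType) (d : nat) (a : 'I_d -> R) (b : R) (x : 'I_d -> R) : Prop :=
  \sum_(i < d) a i * x i = b.

Definition on_sphere (R : realType) (d : nat) (c : 'I_d -> R) (r : R) (x : 'I_d -> R) : Prop :=
  \sum_(i < d) (x i - c i) ^+ 2 = r ^+ 2.

Definition no_k_on_hyperplane (R : realType) (d n k : nat) (A : {set {ffun 'I_d -> 'I_n}}) : Prop :=
  forall (a : 'I_d -> R) (b : R), (exists i, a i != 0) ->
  forall S : {set {ffun 'I_d -> 'I_n}}, S \subset A ->
    (forall x, x \in S -> on_hyperplane a b (grid_pt R x)) -> (#|S| < k)%N.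

Definition no_k_on_sphere (R : realType) (d n k : nat) (A : {set {ffun 'I_d -> 'I_n}}) : Prop :=
  forall (c : 'I_d -> R) (r : R), 0 < r ->
  forall S : {set {ffun 'I_d -> 'I_n}}, S \subset A ->
    (forall x, x \in S -> on_sphere c r (grid_pt R x)) -> (#|S| < k)%N.

From HB Require Import structures.
From mathcomp Require Import all_boot all_order all_algebra.
From mathcomp Require Import reals.
From mathcomp Require Import ring zify.
Import Order.TTheory GRing.Theory Num.Theory.
Set Implicit Arguments. Unset Strict Implicit. Unset Printing Implicit Defensive.

(* Take a prime p in (n/2, n] (Bertrand's postulate, by Erdos's argument) and
   the points x_t = (t mod p, t^2 mod p, ..., t^d mod p) + 1 of [n]^d for
   t = 1, ..., M, where 2dM < p.  If d+1 of them lie on a hyperplane, the integer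
   matrix (t_l^j mod p)_(j, l <= d) is singular over the reals, so its
   determinant vanishes and it is also singular over F_p, where it is a
   Vandermonde matrix with distinct nodes.  If 2d of them lie on a sphere, the
   same reduction applied to d+2 of them at a time shows that all the t_l are
   roots of S + g, where S = sum_i (X^i + 1)^2 is the squared norm of x_t and
   deg g <= d.  Since S + g is monic of degree 2d without X^(2d-1) term, the t_l
   sum to 0 mod p, which is impossible for 2d distinct integers in [1, M]. *)

(** * Bertrand's postulate *)

Lemma bin_leq_pow2 n m : 'C(n.+1, m) <= 2 ^ n.
Proof.
elim: n m => [|n IH] [|m] //.
- by rewrite binS !bin0n; case: m.
- by rewrite bin0 expn_gt0.
- by rewrite binS expnS mul2n -addnn leq_add.
Qed.

Lemma prime_dvd_fact_leq p n : prime p -> p %| n`! -> p <= n.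
Proof.
move=> pp; elim: n => [|n IH]; first by rewrite Euclid_dvd1.
rewrite factS Euclid_dvdM // => /orP[/dvdn_leq -> // | /IH]; exact: leqW.
Qed.

Lemma prime_dvd_bin p n m : prime p -> m < p <= n -> n - m < p -> p %| 'C(n, m).
Proof.
move=> pp /andP[mp pn] nmp.
have : p %| 'C(n, m) * (m`! * (n - m)`!).
  by rewrite bin_fact ?dvdn_fact ?prime_gt0 //; lia.
rewrite !Euclid_dvdM // => /orP[// | /orP[] /(prime_dvd_fact_leq pp)]; lia.
Qed.

Lemma prod_uniq_primes_dvd (s : seq nat) c :
  uniq s -> all prime s -> all (dvdn^~ c) s -> \prod_(p <- s) p %| c.
Proof.
elim: s => [|p s IH] /=; first by rewrite big_nil dvd1n.
case/andP=> ps us /andP[pp sP] /andP[pc sc]; rewrite big_cons Gauss_dvd ?pc ?IH //.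
rewrite prime_coprime // Euclid_dvd_prod // big_has; apply/hasPn => q qs.
rewrite dvdn_prime2 //; last exact: (allP sP).
by apply: contraNneq ps => ->.
Qed.

Lemma prod_primes_leq_pow4 R B : \prod_(0 <= p < R | prime p && (p <= B)) p <= 4 ^ B.
Proof.
elim/ltn_ind: B => B IH.
have [B1 | B2] := leqP B 1.
  by rewrite big1 ?expn_gt0 // => p /andP[/prime_gt1]; lia.
set a := B - B./2; rewrite (bigID (fun p => p <= a)) /=.
have -> : 4 ^ B = 4 ^ a * 4 ^ B./2 by rewrite -expnD; congr (_ ^ _); lia.
apply: leq_mul.
  rewrite (eq_bigl (fun p => prime p && (p <= a))) ?IH // => [|p]; first by lia.
  by case: prime => //=; apply/idP/idP; lia.
(* The primes in (a, B] divide 'C(B, a), as B - a <= a. *)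
apply: leq_trans (_ : 'C(B, a) <= _).
  apply: dvdn_leq; first by rewrite bin_gt0; lia.
  rewrite -big_filter; apply: prod_uniq_primes_dvd.
  - by rewrite filter_uniq ?iota_uniq.
  - by apply/allP => p; rewrite mem_filter => /andP[/andP[/andP[]]].
  apply/allP => p; rewrite mem_filter => /andP[/andP[/andP[pp pB] pa] _].
  by apply: prime_dvd_bin => //; lia.
rewrite -[B in 'C(B, _)]prednK; last by lia.
apply: leq_trans (bin_leq_pow2 _ _) _.
by rewrite (_ : 4 = 2 ^ 2) // -expnM leq_exp2l //; lia.
Qed.

Lemma divn_double_leq m q : 0 < q -> m.*2 %/ q <= (m %/ q).*2.+1.
Proof.
move=> q0; rewrite -ltnS ltn_divLR //.
by have := ltn_ceil m q0; rewrite -!muln2; nia.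
Qed.

Lemma logn_bin_central p m : prime p ->
  logn p 'C(m.*2, m) = \sum_(1 <= k < m.*2.+1) (m.*2 %/ p ^ k - (m %/ p ^ k).*2).
Proof.
move=> pp; have p1 := prime_gt1 pp; have mm : m <= m.*2 by lia.
have := congr1 (logn p) (bin_fact mm); rewrite (_ : m.*2 - m = m); last by lia.
rewrite !lognM ?muln_gt0 ?fact_gt0 ?bin_gt0 //.
have extE : \sum_(1 <= k < m.+1) m %/ p ^ k = \sum_(1 <= k < m.*2.+1) m %/ p ^ k.
  rewrite [RHS](@big_cat_nat _ _ _ m.+1) //=.
  rewrite [X in _ = _ + X]big_nat_cond [X in _ = _ + X]big1 ?addn0 // => k /andP[/andP[mk _] _].
  by rewrite divn_small // (leq_trans mk) // ltnW // ltn_expl.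
rewrite addnn !logn_fact // extE sumnB => [|k _]; last first.
  by rewrite leq_divRL ?expn_gt0 ?prime_gt0 // -!muln2 mulnAC leq_mul2r leq_divM orbT.
by rewrite -(big_morph double doubleD (erefl 0.*2)); lia.
Qed.

Lemma pow_logn_bin_central_leq p m : prime p -> 0 < m -> p ^ logn p 'C(m.*2, m) <= m.*2.
Proof.
move=> pp m0; have p1 := prime_gt1 pp; have m20 : 0 < m.*2 by lia.
have /andP[pL Lp] := trunc_log_bounds p1 m20; set L := trunc_log p m.*2 in pL Lp *.
have L_lt : L < m.*2.+1 by have := ltn_expl L p1; lia.
apply: leq_trans pL; rewrite leq_exp2l // logn_bin_central //.
rewrite (@big_cat_nat _ _ _ L.+1) //=.
rewrite [X in _ + X]big_nat_cond [X in _ + X]big1 ?addn0 => [|k /andP[/andP[Lk _] _]].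
  apply: leq_trans (_ : \sum_(1 <= k < L.+1) 1 <= _).
    apply: leq_sum => k _; rewrite leq_subLR addn1.
    by apply: divn_double_leq; rewrite expn_gt0 prime_gt0.
  by rewrite sum_nat_const_nat muln1 subn1.
have Lpk : p ^ L.+1 <= p ^ k by rewrite leq_exp2l.
by rewrite !divn_small ?subnn //; lia.
Qed.

Lemma logn_bin_central_eq0 p m : prime p -> p <= m -> m.*2 < 3 * p -> m.*2 < p * p ->
  logn p 'C(m.*2, m) = 0.
Proof.
move=> pp pm m3p mpp; have p0 := prime_gt0 pp.
rewrite logn_bin_central //.
apply: big1_seq => -[|[|k]] /andP[_]; rewrite mem_index_iota // => _.
  have m1 : m %/ p = 1 by apply/eqP; rewrite eqn_leq -ltnS ltn_divLR // leq_divRL //; lia.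
  have m2 : m.*2 %/ p = 2 by apply/eqP; rewrite eqn_leq -ltnS ltn_divLR // leq_divRL //; lia.
  by rewrite expn1 m1 m2.
have ppk : p * p <= p ^ k.+2 by rewrite mulnn leq_exp2l // prime_gt1.
by rewrite !divn_small //; lia.
Qed.

Lemma pow4_leq_bin_central m : 4 ^ m <= m.*2.+1 * 'C(m.*2, m).
Proof.
elim: m => [//|m IH].
have C2E : m.+1 * 'C(m.+1.*2, m.+1) = (m.*2.+1 * 'C(m.*2, m)).*2.
  have e1 := mul_bin_diag m.*2.+2 m; have e2 := mul_bin_down m.*2.+1 m.
  rewrite /= (_ : m.*2.+1 - m = m.+1) in e2; last by lia.
  by rewrite doubleS -e1 e2 /= -[RHS]mul2n mulnA; congr (_ * _); lia.
rewrite -(leq_pmul2l (ltn0Sn m)) mulnCA C2E expnS; nia.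
Qed.

Lemma prod_const_nat_leq c n k : \prod_(0 <= i < n | i <= k) c = c ^ minn n k.+1.
Proof.
elim: n => [|n IH]; first by rewrite big_geq.
rewrite big_mkcond big_nat_recr //= -big_mkcond IH.
by case: leqP => nk; [rewrite -expnSr | rewrite muln1]; congr (_ ^ _); lia.
Qed.

Lemma exists_sqrtn n : exists k, k * k <= n < k.+1 * k.+1.
Proof.
elim: n => [|n [k /andP[k1 k2]]]; first by exists 0.
have [nk | kn] := ltnP n.+1 (k.+1 * k.+1); first by exists k; rewrite nk andbT; lia.
by exists k.+1; rewrite kn /=; nia.
Qed.

Lemma leq_mul_cancel2 a b x y : 0 < a -> b <= 2 * a -> a * x <= b * y -> x <= 2 * y.
Proof.
move=> a0 ba /leq_trans h; rewrite -(leq_pmul2l a0) h //.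
by rewrite mulnA (mulnC a) leq_mul2r ba orbT.
Qed.

Lemma pow8_leq_pow2 k : 64 <= k -> k.+1 ^ 8 <= 2 ^ k.
Proof.
elim: k => // k IH; rewrite leq_eqVlt => /orP[/eqP <- | k64]; first by lia.
(* Stated with [leq_mul_cancel2] so that [64 ^ 8] is never unified against a
   pattern, which would compute it in unary. *)
have step : k.+2 ^ 8 <= 2 * k.+1 ^ 8.
  have h : (64 * k.+2) ^ 8 <= (65 * k.+1) ^ 8 by rewrite leq_exp2r //; lia.
  rewrite !expnMn in h; apply: leq_mul_cancel2 h; first by rewrite expn_gt0.
  by lia.
by apply: leq_trans step _; rewrite [2 ^ k.+1]expnS leq_mul2l IH ?orbT.
Qed.

Lemma pow_lt_pow2_sq k : 64 <= k -> k.+1 ^ (6 * k + 12) < 2 ^ (k * k).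
Proof.
move=> k64; rewrite -(ltn_exp2r _ _ (_ : 0 < 8)) // -!expnM mulnC expnM.
apply: leq_ltn_trans (_ : (2 ^ k) ^ (6 * k + 12) < _).
  by rewrite leq_exp2r ?pow8_leq_pow2 //; lia.
by rewrite -expnM ltn_exp2l //; nia.
Qed.

Lemma bertrand_numeric k m : 64 <= k -> k * k <= m.*2 < k.+1 * k.+1 ->
  m.*2.+1 * (m.*2 ^ k.+1 * 4 ^ (m.*2 %/ 3)) < 4 ^ m.
Proof.
move=> k64 /andP[km mk]; set D := m.*2 %/ 3.
have D3 : D * 3 <= m.*2 by apply: leq_divM.
have lhs3 : (m.*2.+1 * (m.*2 ^ k.+1 * 4 ^ D)) ^ 3 <= k.+1 ^ (6 * k + 12) * 4 ^ m.*2.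
  rewrite !expnMn -!expnM mulnA leq_mul ?leq_exp2l //.
  rewrite (_ : 6 * k + 12 = 2 * 3 + 2 * (k.+1 * 3)); last by lia.
  have mk2 : m.*2.+1 <= k.+1 ^ 2 by rewrite -mulnn.
  by rewrite expnD !expnM leq_mul // leq_exp2r // leq_exp2r // ltnW.
have pow4_lt : k.+1 ^ (6 * k + 12) < 4 ^ m.
  apply: leq_trans (pow_lt_pow2_sq k64) _.
  by rewrite (_ : 4 = 2 ^ 2) // -expnM leq_exp2l //; lia.
rewrite -(ltn_exp2r _ _ (_ : 0 < 3)) // -expnM (_ : m * 3 = m + m.*2); last by lia.
by rewrite expnD (leq_ltn_trans lhs3) // ltn_pmul2r ?expn_gt0.
Qed.

Section CentralBinomialWithoutLargePrimes.
Variables m k : nat.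
Hypotheses (m_gt0 : 0 < m) (m_lt_sq : m.*2 < k.+1 * k.+1).
Hypothesis no_prime : forall p, m < p <= m.*2 -> ~~ prime p.

(* The p-part of 'C(2m, m) is at most 2m, at most p once p > sqrt(2m), and
   trivial for 2m/3 < p <= m. *)
Lemma pow_logn_bin_central_leq_factor p :
  p ^ logn p 'C(m.*2, m) <=
    (if p <= k then m.*2 else 1) * (if prime p && (p <= m.*2 %/ 3) then p else 1).
Proof.
set N := 'C(m.*2, m).
have [-> | v0] := posnP (logn p N).
  rewrite muln_gt0; apply/andP; split; first by case: ifP => //; lia.
  by case: ifP => // /andP[/prime_gt0].
have pp : prime p by move: v0; rewrite logn_gt0 mem_primes => /andP[].
have pvm := pow_logn_bin_central_leq pp m_gt0; rewrite -/N in pvm.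
have [pk | kp] := leqP p k.
  rewrite (leq_trans pvm) ?leq_pmulr //.
  by case: ifP => // /andP[/prime_gt0].
have v1 : logn p N = 1.
  apply/eqP; rewrite eqn_leq v0 andbT leqNgt; apply/negP => v2.
  have := leq_trans (leq_pexp2l (prime_gt0 pp) v2) pvm; rewrite -mulnn; nia.
rewrite v1 expn1 mul1n pp /=; case: ifP => // /negbT.
rewrite -ltnNge ltn_divLR // => p3.
have pm : p <= m.
  rewrite leqNgt; apply/negP => mp.
  have p2m : p <= m.*2 by move: pvm; rewrite v1 expn1.
  by have := @no_prime p; rewrite mp p2m pp => /(_ isT).
have m3p : m.*2 < 3 * p by lia.
have mpp : m.*2 < p * p by nia.
by have := logn_bin_central_eq0 pp pm m3p mpp; rewrite -/N v1.
Qed.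

Lemma bin_central_leq_no_prime : 'C(m.*2, m) <= m.*2 ^ k.+1 * 4 ^ (m.*2 %/ 3).
Proof.
set N := 'C(m.*2, m); have N0 : 0 < N by rewrite bin_gt0; lia.
apply: leq_trans (_ : \prod_(0 <= p < N.+1) p ^ logn p N <= _).
  by rewrite -{1}(partnT N0) /partn; apply: eq_leq; apply: eq_bigl.
rewrite (leq_trans (leq_prod (fun p _ => pow_logn_bin_central_leq_factor p))) //.
rewrite big_split /= -!big_mkcond prod_const_nat_leq /= leq_mul ?prod_primes_leq_pow4 //.
by rewrite leq_exp2l; [exact: geq_minr | lia].
Qed.

End CentralBinomialWithoutLargePrimes.

Theorem bertrand m : 2048 <= m -> exists2 p, prime p & m < p <= m.*2.
Proof.
move=> m_ge; have [k /andP[km mk]] := exists_sqrtn m.*2.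
have k64 : 64 <= k by nia.
case: (pickP [pred p : 'I_(m.*2.+1) | prime p && (m < p)]) => [p /andP[pp mp] | noP].
  by exists p => //; rewrite mp -ltnS ltn_ord.
suff : 4 ^ m < 4 ^ m by rewrite ltnn.
apply: leq_ltn_trans (pow4_leq_bin_central m) _.
apply: leq_ltn_trans (bertrand_numeric k64 _); last by rewrite km mk.
rewrite leq_mul2l bin_central_leq_no_prime ?orbT //; first by lia.
move=> p /andP[mp pm]; have := noP (Ordinal (pm : p < m.*2.+1)).
by rewrite /= mp andbT => ->.
Qed.

(** * Reduction of linear relations modulo p *)

Local Open Scope ring_scope.

(* Both relations say that the integer determinant of (E j l) vanishes. *)
Lemma nat_rows_dependent_transfer (R : numFieldType) (F : fieldType) k
    (E : 'I_k -> 'I_k -> nat) :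
  (exists2 v : 'rV[R]_k, v != 0 & forall l, \sum_j v 0 j * (E j l)%:R = 0) ->
  exists2 w : 'rV[F]_k, w != 0 & forall l, \sum_j w 0 j * (E j l)%:R = 0.
Proof.
have detE (G : comNzRingType) :
    \det (\matrix_(j, l) (E j l)%:R : 'M[G]_k) = (\det (\matrix_(j, l) (E j l)%:Z))%:~R.
  rewrite -det_map_mx; congr (\det _); apply/matrixP => j l.
  by rewrite !mxE pmulrn.
have kerE (G : comNzRingType) (w : 'rV[G]_k) :
    (w *m \matrix_(j, l) (E j l)%:R == 0) = [forall l, \sum_j w 0 j * (E j l)%:R == 0].
  have mulE l : (w *m \matrix_(j, l) (E j l)%:R) 0 l = \sum_j w 0 j * (E j l)%:R.
    by rewrite mxE; apply: eq_bigr => j _; rewrite mxE.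
  apply/eqP/forallP => [/rowP wE l | wE]; first by rewrite -mulE wE mxE.
  by apply/rowP => l; rewrite mulE mxE; apply/eqP.
case=> v v0 vE; have /det0P : exists2 v' : 'rV[R]_k, v' != 0 & v' *m \matrix_(j, l) (E j l)%:R = 0.
  by exists v => //; apply/eqP; rewrite kerE; apply/forallP => l; rewrite vE.
rewrite detE intr_eq0 => /eqP detE0.
have /det0P [w w0 /eqP] : \det (\matrix_(j, l) (E j l)%:R : 'M[F]_k) == 0.
  by rewrite detE detE0.
by rewrite kerE => /forallP wE; exists w => // l; apply/eqP.
Qed.

Lemma poly_eq0_of_inj_roots (F : idomainType) k (q : {poly F}) (x : 'I_k -> F) :
  injective x -> (size q <= k)%N -> (forall l, root q (x l)) -> q = 0.
Proof.
move=> xI qk qx; apply: (@roots_geq_poly_eq0 _ _ [seq x l | l <- enum 'I_k]).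
- by apply/allP => _ /mapP[l _ ->].
- by rewrite map_inj_uniq ?enum_uniq.
- by rewrite size_map size_enum_ord.
Qed.

Lemma rVpoly_hornerE (F : comNzRingType) k (w : 'rV[F]_k) z :
  (rVpoly w).[z] = \sum_j w 0 j * z ^+ j.
Proof. by rewrite horner_poly; apply: eq_bigr => j _; rewrite valK. Qed.

Lemma vandermonde_kernel (F : idomainType) k m (w : 'rV[F]_k) (x : 'I_m -> F) :
  injective x -> (k <= m)%N -> (forall l, \sum_j w 0 j * x l ^+ j = 0) -> w = 0.
Proof.
move=> xI km wx; rewrite -[w]rVpolyK (poly_eq0_of_inj_roots (q := rVpoly w) xI).
- by rewrite linear0.
- exact: leq_trans (size_poly _ _) km.
- by move=> l; rewrite /root rVpoly_hornerE wx.
Qed.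

Lemma coefPn_Xn_add_roots (F : fieldType) n (r : {poly F}) (rs : seq F) :
  size rs = n -> (size r < n)%N -> all (root ('X^n + r)) rs -> uniq rs ->
  r`_n.-1 = - \sum_(z <- rs) z.
Proof.
move=> rsn rn rsR rsU; set f := 'X^n + r.
have sf : size f = (size rs).+1 by rewrite size_polyDl size_polyXn ?rsn // ltnS ltnW.
have lf : lead_coef f = 1 by rewrite lead_coefDl ?lead_coefXn // size_polyXn ltnS ltnW.
have rs0 : size rs != 0%N by rewrite rsn -lt0n (leq_ltn_trans _ rn).
have := all_roots_prod_XsubC sf rsR; rewrite uniq_rootsE lf scale1r => /(_ rsU) fE.
have := coefPn_prod_XsubC rs0; rewrite -fE rsn => <-.
by rewrite coefD coefXn (_ : (n.-1 == n) = false) ?add0r //; lia.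
Qed.

(** * The moment curve modulo p *)

Section ModularMomentCurve.
Variable p : nat.
Hypothesis p_pr : prime p.

Lemma Fp_val_lt (y : 'F_p) : (y < p)%N.
Proof. by case: y => y /=; rewrite Fp_cast. Qed.

Lemma Fp_val1 : (1 : 'F_p) = 1 :> nat.
Proof. by have := val_Fp_nat p_pr 1; rewrite mulr1n modn_small // prime_gt1. Qed.

(* The coercion of [t ^+ i.+1 : 'F_p] to nat is the residue of t^(i+1) in [0, p). *)
Definition moment_pt (R : nzSemiRingType) d (t : 'F_p) (i : 'I_d) : R :=
  (t ^+ i.+1).+1%:R.

(* The squared norm of [moment_pt t], as a polynomial in t over F_p. *)
Definition moment_sqnorm d : {poly 'F_p} := \sum_(i < d) ('X^(i.+1) + 1) ^+ 2.

Lemma size_moment_sqnorm d : (size (moment_sqnorm d) <= d.*2.+1)%N.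
Proof.
apply: leq_trans (size_sum _ _ _) _; apply/bigmax_leqP => i _.
apply: leq_trans (size_poly_exp_leq _ _) _.
by rewrite -polyC1 size_XnaddC //=; have := ltn_ord i; lia.
Qed.

Lemma size_moment_sqnorm_subXn d :
  (2 <= d)%N -> (size (moment_sqnorm d - 'X^(d.*2))%R <= (d.*2).-1)%N.
Proof.
case: d => [//|d] d2; rewrite /moment_sqnorm big_ord_recr /= sqrrD1 -exprM muln2.
rewrite addrAC -!addrA addKr; apply/leq_sizeP => j hj.
rewrite -/(moment_sqnorm d) !coefD !coefXn coef1.
have -> : (j == d.+1) = false by apply/eqP; lia.
have -> : (j == 0%N) = false by apply/eqP; lia.
rewrite nth_default; last exact: leq_trans (size_moment_sqnorm d) _.
by rewrite !addr0.
Qed.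

Lemma moment_sqnorm_natE d (t : 'F_p) :
  (\sum_(i < d) (t ^+ i.+1).+1 ^ 2)%N%:R = (moment_sqnorm d).[t].
Proof.
rewrite natr_sum horner_sum; apply: eq_bigr => i _.
by rewrite natrX -natr1 natr_Zp !hornerE.
Qed.

Lemma moment_no_hyperplane (R : numFieldType) d (x : 'I_d.+1 -> 'F_p) (a : 'I_d -> R) b :
  injective x -> (exists i, a i != 0) ->
  ~ (forall l, \sum_i a i * moment_pt R (x l) i = b).
Proof.
move=> xI [i0 ai0] onH.
pose E (j l : 'I_d.+1) := x l ^+ j.
have [w w0 wE] : exists2 w : 'rV['F_p]_d.+1,
    w != 0 & forall l, \sum_j w 0 j * (E j l)%:R = 0.
  apply: nat_rows_dependent_transfer.
  exists (\row_j if unlift ord0 j is Some i then a i else \sum_i a i - b).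
    by apply/eqP => /rowP/(_ (lift ord0 i0))/eqP; rewrite !mxE liftK (negbTE ai0).
  move=> l; rewrite big_ord_recl !mxE unlift_none /E Fp_val1 mulr1.
  under [X in _ + X]eq_bigr => i _ do rewrite mxE liftK lift0.
  rewrite -(onH l) /moment_pt.
  under [in X in _ - X]eq_bigr do rewrite -natr1 mulrDr mulr1.
  by rewrite big_split /=; ring.
move/eqP: w0; apply; apply: (vandermonde_kernel xI) => // l.
by rewrite -[RHS](wE l); apply: eq_bigr => j _; rewrite /E natr_Zp.
Qed.

Lemma moment_cosphere_poly (R : numFieldType) d (x : 'I_d.+2 -> 'F_p) (c : 'I_d -> R) r :
  injective x -> (forall l, \sum_i (moment_pt R (x l) i - c i) ^+ 2 = r ^+ 2) ->
  exists2 g : {poly 'F_p}, (size g <= d.+1)%N & forall l, root (moment_sqnorm d + g) (x l).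
Proof.
move=> xI onS.
pose E (j l : 'I_d.+2) := if unlift ord0 j is Some j' then nat_of_ord (x l ^+ j')
  else (\sum_(i < d) (x l ^+ i.+1).+1 ^ 2)%N.
have [w w0 wE] : exists2 w : 'rV['F_p]_d.+2,
    w != 0 & forall l, \sum_j w 0 j * (E j l)%:R = 0.
  (* |x - c|^2 = r^2 is a linear relation between |x|^2 and the t^j mod p. *)
  apply: nat_rows_dependent_transfer.
  pose c0 := \sum_i c i ^+ 2 - r ^+ 2 - 2 * \sum_i c i.
  exists (\row_j if unlift ord0 j is Some j' then
            (if unlift ord0 j' is Some i then - 2 * c i else c0) else 1).
    by apply/eqP => /rowP/(_ ord0)/eqP; rewrite !mxE unlift_none oner_eq0.
  move=> l; rewrite !big_ord_recl !mxE /E !unlift_none liftK unlift_none.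
  rewrite expr0 Fp_val1 mul1r mulr1.
  have sqE : ((\sum_(i < d) (x l ^+ i.+1).+1 ^ 2)%N)%:R =
             \sum_(i < d) moment_pt R (x l) i ^+ 2.
    by rewrite natr_sum; apply: eq_bigr => i _; rewrite natrX.
  have linE (i : 'I_d) : (x l ^+ i.+1 : 'F_p)%:R = moment_pt R (x l) i - 1.
    by rewrite /moment_pt -natr1 addrK.
  rewrite sqE; under [X in _ + (_ + X)]eq_bigr => i _ do rewrite mxE !liftK lift0 linE.
  rewrite /c0 -(onS l) mulr_sumr -!sumrB -!big_split /=.
  by apply: big1 => i _; ring.
pose w' := \row_j w 0 (lift ord0 j) : 'rV_d.+1.
have wE' l : w 0 ord0 * (moment_sqnorm d).[x l] + (rVpoly w').[x l] = 0.
  rewrite -(wE l) big_ord_recl /E unlift_none moment_sqnorm_natE rVpoly_hornerE.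
  by congr (_ + _); apply: eq_bigr => j _; rewrite mxE liftK natr_Zp.
have w00 : w 0 ord0 != 0.
  apply: contra_neq w0 => w00; apply/rowP => j; rewrite mxE.
  case: (unliftP ord0 j) => [j'|] -> //.
  have w'0 : w' = 0.
    apply: (vandermonde_kernel xI (leqnSn _)) => l.
    by rewrite -rVpoly_hornerE -(wE' l) w00 mul0r add0r.
  by have /rowP/(_ j') := w'0; rewrite !mxE.
exists ((w 0 ord0)^-1 *: rVpoly w').
  exact: leq_trans (size_scale_leq _ _) (size_poly _ _).
move=> l; apply/eqP.
by rewrite hornerD hornerZ -[(moment_sqnorm d).[_]](mulKf w00) -mulrDr wE' mulr0.
Qed.

Lemma moment_cosphere_roots (R : numFieldType) d (x : 'I_(d.*2) -> 'F_p) (c : 'I_d -> R) r :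
  (2 <= d)%N -> injective x ->
  (forall l, \sum_i (moment_pt R (x l) i - c i) ^+ 2 = r ^+ 2) ->
  exists2 g : {poly 'F_p}, (size g <= d.+1)%N & forall l, root (moment_sqnorm d + g) (x l).
Proof.
move=> d2 xI onS; have d1_lt : (d.+1 < d.*2)%N by lia.
pose y (j : 'I_d.+1) := x (widen_ord (ltnW d1_lt) j).
have yI : injective y by move=> j k /xI/(congr1 val) jk; apply: val_inj.
pose xz (l : 'I_(d.*2)) (j : 'I_d.+2) :=
  if unlift ord_max j is Some j' then y j' else x l.
have xzI (l : 'I_(d.*2)) : (d.+1 <= l)%N -> injective (xz l).
  move=> dl j k; rewrite /xz.
  case: (unliftP ord_max j) => [j'|] ->; case: (unliftP ord_max k) => [k'|] -> //.
  - by move/yI ->.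
  - by move/xI => lE; move: dl (ltn_ord j'); rewrite -lE /=; lia.
  - by move/xI => lE; move: dl (ltn_ord k'); rewrite lE /=; lia.
have gP (l : 'I_(d.*2)) : (d.+1 <= l)%N ->
    exists2 g : {poly 'F_p}, (size g <= d.+1)%N & forall j, root (moment_sqnorm d + g) (xz l j).
  move=> dl; apply: moment_cosphere_poly (xzI l dl) _ => j.
  by rewrite /xz; case: unlift => [j'|]; apply: onS.
have [g gs groot] := gP (Ordinal d1_lt) (leqnn _).
exists g => // l; case: (ltnP l d.+1) => dl.
  have := groot (lift ord_max (Ordinal dl)); rewrite /xz liftK /y.
  by congr (root _ (x _)); apply: val_inj.
have [g' g's g'root] := gP l dl.
(* g' and g agree on the first d+1 parameters. *)
suff <- : g' = g by have := g'root ord_max; rewrite /xz unlift_none.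
apply/eqP; rewrite -subr_eq0; apply/eqP/(poly_eq0_of_inj_roots yI).
  by rewrite (leq_trans (size_polyD _ _)) // size_polyN geq_max g's gs.
move=> j; have := g'root (lift ord_max j); have := groot (lift ord_max j).
rewrite /xz liftK /root !hornerD hornerN subr_eq0 => /eqP gy /eqP g'y.
by apply/eqP/(addrI (moment_sqnorm d).[y j]); rewrite gy g'y.
Qed.

Lemma moment_cosphere_sum (R : numFieldType) d (x : 'I_(d.*2) -> 'F_p) (c : 'I_d -> R) r :
  (2 <= d)%N -> injective x ->
  (forall l, \sum_i (moment_pt R (x l) i - c i) ^+ 2 = r ^+ 2) -> \sum_l x l = 0.
Proof.
move=> d2 xI /(moment_cosphere_roots d2 xI)[g gs rootS].
pose rs := [seq x l | l <- enum 'I_(d.*2)].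
have rsE : \sum_(z <- rs) z = \sum_l x l by rewrite big_map big_enum.
have rs_size : size rs = d.*2 by rewrite size_map size_enum_ord.
have rest_size : (size (moment_sqnorm d - 'X^(d.*2) + g)%R <= (d.*2).-1)%N.
  rewrite (leq_trans (size_polyD _ _)) // geq_max size_moment_sqnorm_subXn //.
  by rewrite (leq_trans gs) //; lia.
have fE : 'X^(d.*2) + (moment_sqnorm d - 'X^(d.*2) + g) = moment_sqnorm d + g.
  by rewrite addrA addrCA subrr addr0.
have rs_uniq : uniq rs by rewrite map_inj_uniq ?enum_uniq.
have rs_roots : all (root ('X^(d.*2) + (moment_sqnorm d - 'X^(d.*2) + g))) rs.
  by rewrite fE; apply/allP => _ /mapP[l _ ->].
have rest_lt : (size (moment_sqnorm d - 'X^(d.*2) + g)%R < d.*2)%N.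
  by rewrite (leq_ltn_trans rest_size) //; lia.
have := coefPn_Xn_add_roots rs_size rest_lt rs_roots rs_uniq.
by rewrite nth_default // -rsE => /esym/eqP; rewrite oppr_eq0 => /eqP.
Qed.

End ModularMomentCurve.

Lemma exists_inj_ord (T : finType) (A : {set T}) k : (k <= #|A|)%N ->
  exists2 x : 'I_k -> T, injective x & forall l, x l \in A.
Proof.
move=> kA; exists (fun l => enum_val (widen_ord kA l)); last by move=> l; exact: enum_valP.
by move=> l l' /enum_val_inj/(congr1 val) ll'; apply: val_inj.
Qed.

Lemma no_k_on_hyperplane_card (R : realType) d n k (A : {set {ffun 'I_d -> 'I_n}}) :
  (#|A| < k)%N -> no_k_on_hyperplane R k A.
Proof. by move=> Ak a b _ S SA _; exact: leq_ltn_trans (subset_leq_card SA) Ak. Qed.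

Lemma no_k_on_sphere_card (R : realType) d n k (A : {set {ffun 'I_d -> 'I_n}}) :
  (#|A| < k)%N -> no_k_on_sphere R k A.
Proof. by move=> Ak c r _ S SA _; exact: leq_ltn_trans (subset_leq_card SA) Ak. Qed.

Section MomentSet.
Variables (R : realType) (d n p : nat).
Hypotheses (p_pr : prime p) (p_le_n : (p <= n)%N).
Variable M : nat.
Hypotheses (d_gt0 : (0 < d)%N) (M_small : (M * d.*2 < p)%N).

Definition moment_grid (t : 'F_p) : {ffun 'I_d -> 'I_n} :=
  [ffun i : 'I_d => Ordinal (leq_trans (Fp_val_lt p_pr (t ^+ i.+1)) p_le_n)].

Lemma grid_pt_moment_grid t i : grid_pt R (moment_grid t) i = moment_pt R t i.
Proof. by rewrite /grid_pt ffunE. Qed.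

Lemma moment_grid_inj : injective moment_grid.
Proof.
move=> t t' /ffunP/(_ (Ordinal d_gt0)); rewrite !ffunE /= !expr1 => /(congr1 val) tt'.
exact: val_inj.
Qed.

Definition moment_params : {set 'F_p} := [set (t.+1)%:R | t : 'I_M].

Lemma moment_params_val t : t \in moment_params -> (0 < t <= M)%N.
Proof.
by case/imsetP=> s _ ->; rewrite val_Fp_nat // modn_small; have := ltn_ord s; nia.
Qed.

Definition moment_set := moment_grid @: moment_params.

Lemma card_moment_set : #|moment_set| = M.
Proof.
rewrite card_imset; last exact: moment_grid_inj.
rewrite card_imset ?card_ord // => s s' /(congr1 (@nat_of_ord _)).
rewrite !val_Fp_nat // !modn_small => [[/ord_inj] //||].
  by have := ltn_ord s'; nia.
by have := ltn_ord s; nia.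
Qed.

Lemma moment_set_params k (S : {set {ffun 'I_d -> 'I_n}}) :
    S \subset moment_set -> (k <= #|S|)%N ->
  exists2 x : 'I_k -> 'F_p, injective x &
    forall l, x l \in moment_params /\ moment_grid (x l) \in S.
Proof.
move=> SA kS; set T := moment_params :&: moment_grid @^-1: S.
have ST : S = moment_grid @: T.
  apply/setP => s; apply/idP/idP => [sS | /imsetP[t]]; last by rewrite !inE => /andP[_ tS] ->.
  have /imsetP[t tP sE] := subsetP SA s sS.
  by apply/imsetP; exists t; rewrite // !inE tP -sE.
have [|x xI xT] := @exists_inj_ord _ T k.
  by rewrite ST card_imset // in kS; exact: moment_grid_inj.
by exists x => // l; have := xT l; rewrite !inE => /andP[].
Qed.

Lemma moment_set_no_hyperplane : no_k_on_hyperplane R d.+1 moment_set.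
Proof.
move=> a b a0 S SA onH; rewrite ltnNge; apply/negP => kS.
have [x xI xS] := moment_set_params SA kS.
apply: (moment_no_hyperplane (b := b) p_pr xI a0) => l.
have [_ /onH] := xS l; rewrite /on_hyperplane => <-.
by apply: eq_bigr => i _; rewrite grid_pt_moment_grid.
Qed.

Lemma moment_set_no_sphere : (2 <= d)%N -> no_k_on_sphere R (2 * d) moment_set.
Proof.
move=> d2 c r _ S SA onS; rewrite ltnNge mul2n; apply/negP => kS.
have [x xI xS] := moment_set_params SA kS.
have onS' l : \sum_i (moment_pt R (x l) i - c i) ^+ 2 = r ^+ 2.
  have [_ /onS] := xS l; rewrite /on_sphere => <-.
  by apply: eq_bigr => i _; rewrite grid_pt_moment_grid.
have xM l : (0 < x l <= M)%N by have [/moment_params_val] := xS l.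
pose s := (\sum_l (x l : nat))%N.
have s_gt0 : (0 < s)%N.
  have l0 : 'I_(d.*2) by exists 0%N; lia.
  by rewrite /s (bigD1 l0) //=; have := xM l0; lia.
have s_lt : (s < p)%N.
  apply: leq_ltn_trans M_small; rewrite mulnC -[X in (_ <= X * _)%N]card_ord -sum_nat_const.
  by apply: leq_sum => l _; have := xM l; lia.
have := moment_cosphere_sum p_pr d2 xI onS'.
have -> : \sum_l x l = s%:R by rewrite natr_sum; apply: eq_bigr => l _; rewrite natr_Zp.
move/(congr1 (@nat_of_ord _)); rewrite val_Fp_nat // modn_small //= => s0.
by rewrite s0 in s_gt0.
Qed.

End MomentSet.

Lemma ler_invn_mul (R : numFieldType) (k n a : nat) : (0 < k)%N -> (n <= k * a)%N ->
  k%:R^-1 * n%:R <= a%:R :> R.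
Proof.
move=> k0 nka; have k0' : 0 < k%:R :> R by rewrite ltr0n.
by rewrite -(ler_pM2l k0') mulrA mulfV ?gt_eqF // mul1r -natrM ler_nat.
Qed.

Unset Implicit Arguments.

Theorem theorem4p1 (R : realType) (d : nat) (hd : (2 <= d)%N) :
  exists c : R, 0 < c /\
    forall n : nat, (0 < n)%N ->
      exists A : {set {ffun 'I_d -> 'I_n}},
        c * n%:R <= #|A|%:R /\
        no_k_on_hyperplane R d.+1 A /\
        no_k_on_sphere R (2 * d) A.
Proof.
(* For n >= n0 there are p > n/2 and M = (p-1)/(2d) >= n/(8d) parameters; below
   n0 a single point will do. *)
pose n0 := (4096 + 8 * d)%N; pose k := (n0 * (8 * d))%N.
have k_gt0 : (0 < k)%N by rewrite /k /n0; lia.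
exists k%:R^-1; split=> [|n n_gt0]; first by rewrite invr_gt0 ltr0n.
have [n_small | n_large] := ltnP n n0.
  exists [set [ffun=> Ordinal n_gt0]]; rewrite cards1; split.
    by apply: ler_invn_mul; rewrite // /k; nia.
  split; [apply: no_k_on_hyperplane_card | apply: no_k_on_sphere_card]; rewrite cards1; lia.
have half_ge : (2048 <= n./2)%N by lia.
have [p p_pr /andP[n_lt_p p_le]] := bertrand half_ge.
have p_le_n : (p <= n)%N by lia.
pose M := (p.-1 %/ d.*2)%N.
have M_small : (M * d.*2 < p)%N.
  by apply: leq_ltn_trans (leq_divM _ _) _; have := prime_gt0 p_pr; lia.
have d_gt0 : (0 < d)%N by lia.
exists (moment_set d p_pr p_le_n M); split; last first.
  by split; [apply: moment_set_no_hyperplane | apply: moment_set_no_sphere].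
rewrite card_moment_set //; apply: ler_invn_mul => //.
have : (p.-1 < M.+1 * d.*2)%N by apply: ltn_ceil; lia.
rewrite /k /n0; nia.
Qed.
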